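(* Let $M=(W,\bm{\Box},V)$ be a transitive neighborhood model and $\Sigma$ a set of formulas closed under subformulas. Then the transitive filtration $M^{T}_f=(W_f,\bm{\Box}^{T}_f,V_f)$ of $M$ through $\Sigma$ is a filtration of $M$ through $\Sigma$, i.e. $\bm{\Box}^{T}_f\widetilde{|\varphi|}_M=\widetilde{|\Box\varphi|}_M$ for every formula $\Box\varphi\in\Sigma$.
   Context: A neighborhood model is $M=(W,\bm{\Box},V)$ with $W\neq\varnothing$, $\bm{\Box}:\mathcal P(W)\to\mathcal P(W)$, $V:Var\to\mathcal P(W)$; truth sets: $|p|_M=V(p)$, $|\neg\varphi|_M=W\setminus|\varphi|_M$, $|\varphi\wedge\psi|_M=|\varphi|_M\cap|\psi|_M$, $|\Box\varphi|_M=\bm{\Box}|\varphi|_M$. $M$ is transitive if $\bm{\Box}X\subseteq\bm{\Box}\bm{\Box}X$ for all $X\subseteq W$. For $\Sigma$ closed under subformulas, $w\sim v$ iff $w,v$ satisfy the same formulas of $\Sigma$; $\widetilde w$ is the class of $w$, $W_f=\{\widetilde w:w\in W\}$, $\widetilde X=\{\widetilde w:w\in X\}$, $V_f(p)=\widetilde{|p|}_M$. A filtration of $M$ through $\Sigma$ is a model $(W_f,\bm{\Box}_f,V_f)$ with $\bm{\Box}_f\widetilde{|\varphi|}_M=\widetilde{|\Box\varphi|}_M$ whenever $\Box\varphi\in\Sigma$. The minimal filtration has $\bm{\Box}^{-}_fX=\widetilde{|\Box\varphi|}_M$ if $X=\widetilde{|\varphi|}_M$ for some formula $\Box\varphi\in\Sigma$,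 and $\bm{\Box}^{-}_fX=\varnothing$ otherwise. For any function $\bm{\Box}':\mathcal P(U)\to\mathcal P(U)$, its closure $\widehat{\bm{\Box}'}$ is given by $\widehat{\bm{\Box}'}X=X$ if $X=\bm{\Box}'Y$ for some $Y\subseteq U$, and $\varnothing$ otherwise. The transitive filtration is $M^{T}_f=(W_f,\bm{\Box}^{T}_f,V_f)$ with $\bm{\Box}^{T}_fX=\bm{\Box}^{-}_fX\cup\widehat{\bm{\Box}^{-}_f}X$. *)

From Stdlib Require Import Classical ClassicalEpsilon.
Unset Implicit Arguments.

Inductive form (Var : Type) : Type :=
| FVar : Var -> form Var
| FNeg : form Var -> form Var
| FAnd : form Var -> form Var -> form Var
| FBox : form Var -> form Var.
Arguments FVar {Var}. Arguments FNeg {Var}. Arguments FAnd {Var}. Arguments FBox {Var}.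

Definition subset {T : Type} (A B : T -> Prop) : Prop := forall x, A x -> B x.

(* Neighborhood model (W, Box, V); nonemptiness of W is a separate hypothesis. *)
Record nmodel (Var : Type) := NModel {
  world : Type;
  nbox : (world -> Prop) -> (world -> Prop);
  nval : Var -> world -> Prop }.
Arguments world {Var}. Arguments nbox {Var}. Arguments nval {Var}.

Section Model.
Variables (Var : Type) (M : nmodel Var).
Local Notation W := (world M).

Fixpoint truth (phi : form Var) : W -> Prop :=
  match phi with
  | FVar p => nval M p
  | FNeg a => fun w => ~ truth a w
  | FAnd a b => fun w => truth a w /\ truth b w
  | FBox a => nbox M (truth a)
  end.

Definition transitive_model : Prop :=
  forall X : W -> Prop, subset (nbox M X) (nbox M (nbox M X)).

Definition subformula_closed (Sigma : form Var -> Prop) : Prop :=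
  (forall a, Sigma (FNeg a) -> Sigma a) /\
  (forall a b, Sigma (FAnd a b) -> Sigma a /\ Sigma b) /\
  (forall a, Sigma (FBox a) -> Sigma a).

Variable Sigma : form Var -> Prop.

Definition sim (w v : W) : Prop :=
  forall phi, Sigma phi -> (truth phi w <-> truth phi v).

Definition cls (w : W) : W -> Prop := fun v => sim w v.

Definition Wf : Type := { C : W -> Prop | exists w, C = cls w }.

Definition tilde (X : W -> Prop) : Wf -> Prop :=
  fun c => exists w, X w /\ proj1_sig c = cls w.

Definition Vf (p : Var) : Wf -> Prop := tilde (nval M p).

Definition box_min (X : Wf -> Prop) : Wf -> Prop :=
  match excluded_middle_informative
          (exists phi, Sigma (FBox phi) /\ X = tilde (truth phi)) with
  | left H => tilde (truth (FBox (proj1_sig (constructive_indefinite_description _ H))))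
  | right _ => fun _ => False
  end.

Definition is_filtration (boxf : (Wf -> Prop) -> (Wf -> Prop)) : Prop :=
  forall phi, Sigma (FBox phi) -> boxf (tilde (truth phi)) = tilde (truth (FBox phi)).

End Model.

Definition closure_box {U : Type} (B' : (U -> Prop) -> (U -> Prop)) (X : U -> Prop)
  : U -> Prop :=
  match excluded_middle_informative (exists Y, X = B' Y) with
  | left _ => X
  | right _ => fun _ => False
  end.

Definition box_trans (Var : Type) (M : nmodel Var) (Sigma : form Var -> Prop)
  (X : Wf Var M Sigma -> Prop) : Wf Var M Sigma -> Prop :=
  fun c => box_min Var M Sigma X c \/ closure_box (box_min Var M Sigma) X c.

From Stdlib Require Import ClassicalEpsilon FunctionalExtensionality PropExtensionality.

(* The minimal filtration already satisfies the filtration condition, so it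
   suffices to show that the closure part of [~|phi|] lies inside [~|[]phi|].
   That part is nonempty only when [~|phi|] is itself a value [~|[]chi|] of the
   minimal box; as both formulas lie in Sigma, [|phi| = [](|chi|)], and
   transitivity gives [|phi| = [](|chi|) <= [][](|chi|) = [](|phi|)]. *)

Lemma pred_ext {T : Type} (A B : T -> Prop) : (forall x, A x <-> B x) -> A = B.
Proof.
  intro H. apply functional_extensionality; intro x.
  apply propositional_extensionality, H.
Qed.

Lemma closure_boxP {U : Type} (B : (U -> Prop) -> U -> Prop) X x :
  closure_box B X x -> X x /\ exists Y, X = B Y.
Proof.
  unfold closure_box. destruct excluded_middle_informative as [HY | _].
  - auto.
  - contradiction.
Qed.

Section Filtration.
Variables (Var : Type) (M : nmodel Var) (Sigma : form Var -> Prop).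

Local Notation tset := (truth Var M).
Local Notation tl := (tilde Var M Sigma).

Definition class_of (w : world M) : Wf Var M Sigma :=
  exist _ (cls Var M Sigma w) (ex_intro _ w eq_refl).

Lemma tilde_truth_class a w : Sigma a -> (tl (tset a) (class_of w) <-> tset a w).
Proof.
  intro Ha; split.
  - intros [v [Hv Ewv]].
    assert (Hwv : sim Var M Sigma w v).
    { simpl in Ewv. change (cls Var M Sigma w v). rewrite Ewv. intros psi _. tauto. }
    apply (Hwv a Ha), Hv.
  - intro Hw. exists w. auto.
Qed.

Lemma tilde_truth_inj a b : Sigma a -> Sigma b ->
  tl (tset a) = tl (tset b) -> tset a = tset b.
Proof.
  intros Ha Hb E. apply pred_ext; intro w.
  rewrite <- (tilde_truth_class a w Ha), <- (tilde_truth_class b w Hb), E.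
  tauto.
Qed.

Lemma tilde_monotone (A B : world M -> Prop) : subset A B -> subset (tl A) (tl B).
Proof. intros HAB c [w [Hw Ec]]. exists w. auto. Qed.

Lemma box_min_range Y :
  (forall c, ~ box_min Var M Sigma Y c) \/
  exists chi, Sigma (FBox chi) /\ box_min Var M Sigma Y = tl (tset (FBox chi)).
Proof.
  unfold box_min. destruct excluded_middle_informative as [H | _].
  - right. destruct (constructive_indefinite_description _ H) as [chi [Hchi EY]]; simpl.
    exists chi. auto.
  - left. auto.
Qed.

Hypothesis Sigma_box_closed : forall a, Sigma (FBox a) -> Sigma a.

Lemma box_min_is_filtration : is_filtration Var M Sigma (box_min Var M Sigma).
Proof.
  intros phi Hphi. unfold box_min.
  destruct excluded_middle_informative as [H | H].
  - destruct (constructive_indefinite_description _ H) as [psi [Hpsi E]]; simpl.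
    rewrite (tilde_truth_inj phi psi (Sigma_box_closed _ Hphi) (Sigma_box_closed _ Hpsi) E).
    reflexivity.
  - exfalso. apply H. exists phi. auto.
Qed.

Lemma transitive_tilde_box_fixed phi chi :
  transitive_model Var M -> Sigma phi -> Sigma (FBox chi) ->
  tl (tset phi) = tl (tset (FBox chi)) -> subset (tl (tset phi)) (tl (tset (FBox phi))).
Proof.
  intros Htr Hphi Hchi E. apply tilde_monotone.
  assert (Ephi : tset phi = nbox M (tset chi)) by exact (tilde_truth_inj _ _ Hphi Hchi E).
  simpl. rewrite Ephi. apply Htr.
Qed.

End Filtration.

Theorem mainTheorem6 (Var : Type) (M : nmodel Var) (Sigma : form Var -> Prop) :
  inhabited (world M) ->
  transitive_model Var M ->
  subformula_closed Var Sigma ->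
  is_filtration Var M Sigma (box_trans Var M Sigma).
Proof.
  intros _ Htr [_ [_ Hbox]] phi Hphi.
  unfold box_trans.
  rewrite (box_min_is_filtration Var M Sigma Hbox phi Hphi).
  apply pred_ext; intro c; split; [intros [Hc | Hc] | now left].
  - exact Hc.
  - destruct (closure_boxP _ _ _ Hc) as [Hc' [Y EY]].
    destruct (box_min_range Var M Sigma Y) as [Hempty | [chi [Hchi EY']]].
    + rewrite EY in Hc'. contradiction (Hempty c).
    + rewrite EY' in EY.
      exact (transitive_tilde_box_fixed Var M Sigma phi chi Htr (Hbox _ Hphi) Hchi EY c Hc').
Qed.
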